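(* Let $F:\mathcal{P}(V,A)\to S_2(A)$ be a consular election rule satisfying SPP and SPO. Let $P$ be a profile with $F(P)=\{a,b\}$, let $i$ be a voter, $s\in A$, and let $P_i'$ be the linear order obtained from $P_i$ by moving $s$ up some number of positions (the relative order of the other alternatives unchanged). If $s\in\{a,b\}$, then $F(P_i'P_{-i})=F(P)$. If $s\notin\{a,b\}$, then either $F(P_i'P_{-i})=F(P)$, or $F(P_i'P_{-i})=(\{a,b\}\setminus\{x\})\cup\{s\}$ for some $x\in\{a,b\}$; and the latter happens only if $s$ overtakes $x$, i.e. $x\succ_i s$ in $P_i$ and $s\succ_i' x$ in $P_i'$.
   Context: $V$ is a finite nonempty set of voters, $A$ a finite set of alternatives; a profile $P$ assigns to each voter $i$ a linear order $P_i$ on $A$; $P_i'P_{-i}$ replaces voter $i$'s order by $P_i'$. $S_2(A)$ is the set of 2-element subsets of $A$; a consular election rule is a map $F:\mathcal{P}(V,A)\to S_2(A)$. SPO: for all $P$, $i$, $P_i'$, $\mathrm{best}(P_i,F(P))\succeq_i\mathrm{best}(P_i,F(P_i'P_{-i}))$; SPP: same with $\mathrm{worst}$, where $\mathrm{best}(P_i,W)$, $\mathrm{worst}(P_i,W)$ are the $P_i$-best and $P_i$-worst elements of $W$. *)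

From mathcomp Require Import all_boot.
Set Implicit Arguments. Unset Strict Implicit. Unset Printing Implicit Defensive.

(* A linear order on A, given by its strict "is preferred to" relation:
   [lo_rel R x y] means x is strictly better than y. *)
Record lorder (A : finType) := LOrder {
  lo_rel : rel A;
  lo_irr : irreflexive lo_rel;
  lo_trans : transitive lo_rel;
  lo_total : forall x y, x != y -> lo_rel x y || lo_rel y x
}.

Definition profile (V A : finType) := V -> lorder A.

Definition upd (V A : finType) (P : profile V A) (i : V) (Ri : lorder A)
  : profile V A := fun j => if j == i then Ri else P j.

Definition consular (V A : finType) (F : profile V A -> {set A}) :=
  forall P, #|F P| = 2.

Definition is_best (A : finType) (R : lorder A) (W : {set A}) (x : A) :=
  x \in W /\ forall y, y \in W -> y != x -> lo_rel R x y.
Definition is_worst (A : finType) (R : lorder A) (W : {set A}) (x : A) :=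
  x \in W /\ forall y, y \in W -> y != x -> lo_rel R y x.

Definition weakpref (A : finType) (R : lorder A) (x y : A) :=
  x = y \/ lo_rel R x y.

Definition SPO (V A : finType) (F : profile V A -> {set A}) :=
  forall (P : profile V A) (i : V) (Ri' : lorder A) (x y : A),
    is_best (P i) (F P) x -> is_best (P i) (F (upd P i Ri')) y ->
    weakpref (P i) x y.

Definition SPP (V A : finType) (F : profile V A -> {set A}) :=
  forall (P : profile V A) (i : V) (Ri' : lorder A) (x y : A),
    is_worst (P i) (F P) x -> is_worst (P i) (F (upd P i Ri')) y ->
    weakpref (P i) x y.

(* R' is obtained from R by moving s up some number of positions:
   the relative order of the alternatives other than s is unchanged,
   and every alternative below s in R is still below s in R'. *)
Definition moves_up (A : finType) (R R' : lorder A) (s : A) :=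
  (forall x y, x != s -> y != s -> lo_rel R' x y = lo_rel R x y) /\
  (forall x, lo_rel R s x -> lo_rel R' s x).

From mathcomp Require Import all_boot zify.
From Stdlib Require Import FunctionalExtensionality.
Set Implicit Arguments. Unset Strict Implicit. Unset Printing Implicit Defensive.

(* SPO and SPP, applied to the deviation from P to P' and to the reverse one,
   compare the best and the worst of the two pairs in both orders; since only s
   moves, a case analysis on the position of s shows that F(P') = F(P), or that s
   replaces a member of {a, b} it overtook, or that s overtook both a and b.
   Comparisons are encoded by ranks so that this case analysis is linear
   arithmetic. The last case is removed by raising s in two steps, pausing
   between a and b (a above b): the first step can only let s replace b, after
   which s is elected and stays elected; otherwise the second step can only let s
   replace a. *)

Section LinearOrders.
Variable A : finType.
Implicit Types (R : lorder A) (x y z : A).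

Definition rank R x := #|[pred y | lo_rel R y x]|.

Lemma lo_rel_trans R x y z : lo_rel R x y -> lo_rel R y z -> lo_rel R x z.
Proof. exact: lo_trans. Qed.

Lemma lo_rel_neq R x y : lo_rel R x y -> x != y.
Proof. by apply: contraTneq => ->; rewrite lo_irr. Qed.

Lemma lo_asym R x y : lo_rel R x y -> ~~ lo_rel R y x.
Proof. by move=> xy; apply/negP=> /(lo_trans xy); rewrite lo_irr. Qed.

Lemma lo_relN R x y : x != y -> ~~ lo_rel R x y -> lo_rel R y x.
Proof. by move=> /(lo_total R); case: (lo_rel R x y). Qed.

Lemma rank_lt R x y : lo_rel R x y -> rank R x < rank R y.
Proof.
move=> xy; apply/proper_card/properP; split.
  by apply/subsetP=> z; rewrite !inE => /lo_trans; apply.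
by exists x; rewrite !inE ?xy ?lo_irr.
Qed.

Lemma lo_rel_rank R x y : lo_rel R x y = (rank R x < rank R y).
Proof.
apply/idP/idP=> [|lt_xy]; first exact: rank_lt.
have [eq_xy | neq_xy] := eqVneq x y; first by rewrite eq_xy ltnn in lt_xy.
apply: contraTT lt_xy => /(lo_relN neq_xy)/rank_lt/ltnW.
by rewrite leqNgt.
Qed.

Lemma rank_inj R : injective (rank R).
Proof.
move=> x y eq_rk; have [//|neq_xy] := eqVneq x y.
by case/orP: (lo_total R neq_xy) => /rank_lt; rewrite eq_rk ltnn.
Qed.

Lemma rank_eq R x y : (rank R x == rank R y) = (x == y).
Proof. exact/inj_eq/rank_inj. Qed.

Lemma pair_sorted R (T : {set A}) : #|T| = 2 ->
  exists a b, T = [set a; b] /\ lo_rel R a b.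
Proof.
move=> /eqP/cards2P[x [y [neq_xy ->]]].
case xy: (lo_rel R x y); first by exists x, y.
by exists y, x; rewrite setUC (lo_relN neq_xy) ?xy.
Qed.

Lemma best_pair R x y : x != y ->
  exists2 z, is_best R [set x; y] z & rank R z = minn (rank R x) (rank R y).
Proof.
wlog xy : x y / lo_rel R x y => [hwlog neq_xy|_].
  case xy: (lo_rel R x y); first exact: hwlog.
  have [||z best_z rk_z] := hwlog y x; [exact: lo_relN (negbT xy) | by rewrite eq_sym |].
  by exists z; [rewrite setUC | rewrite minnC].
exists x; last by apply/esym/minn_idPl/ltnW/rank_lt.
split=> [|z]; first by rewrite !inE eqxx.
by rewrite !inE => /orP[]/eqP-> //; rewrite eqxx.
Qed.

Lemma worst_pair R x y : x != y ->
  exists2 z, is_worst R [set x; y] z & rank R z = maxn (rank R x) (rank R y).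
Proof.
wlog xy : x y / lo_rel R x y => [hwlog neq_xy|_].
  case xy: (lo_rel R x y); first exact: hwlog.
  have [||z worst_z rk_z] := hwlog y x; [exact: lo_relN (negbT xy) | by rewrite eq_sym |].
  by exists z; [rewrite setUC | rewrite maxnC].
exists y; last by apply/esym/maxn_idPr/ltnW/rank_lt.
split=> [|z]; first by rewrite !inE eqxx orbT.
by rewrite !inE => /orP[]/eqP-> //; rewrite eqxx.
Qed.

Lemma weakpref_rank R x y : weakpref R x y -> rank R x <= rank R y.
Proof. by case=> [->|/rank_lt/ltnW]. Qed.

End LinearOrders.

Arguments rank_eq {A} R x y.

Section Reinsert.
Variables (A : finType) (R : lorder A) (s : A) (D : pred A).
Hypothesis D_down : forall x y, D x -> y != s -> lo_rel R x y -> D y.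

Definition reinsert_rel : rel A := fun x y =>
  if x == s then (y != s) && D y else if y == s then ~~ D x else lo_rel R x y.

Lemma reinsert_irr : irreflexive reinsert_rel.
Proof. by move=> x; rewrite /reinsert_rel; case: eqP => _; rewrite ?eqxx ?lo_irr. Qed.

Lemma reinsert_trans : transitive reinsert_rel.
Proof.
move=> y x z; rewrite /reinsert_rel.
have [?|xs] := eqVneq x s; have [?|ys] := eqVneq y s;
  have [?|zs] := eqVneq z s; subst; rewrite ?eqxx //=.
- by move=> ->.
- by move=> Dy; apply: D_down Dy zs.
- move=> NDx Dz; have [exz|nxz] := eqVneq x z; first by rewrite exz Dz in NDx.
  case xz: (lo_rel R x z) => //; move/negbT: xz => /(lo_relN nxz) zx.
  by rewrite (D_down Dz xs zx) in NDx.
- by move=> xy; apply: contra => Dx; apply: D_down Dx ys xy.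
- exact: lo_trans.
Qed.

Lemma reinsert_total x y : x != y -> reinsert_rel x y || reinsert_rel y x.
Proof.
rewrite /reinsert_rel; have [?|xs] := eqVneq x s; have [?|ys] := eqVneq y s;
  subst; rewrite ?eqxx //= => neq_xy; first by case: (D y).
  by case: (D x).
exact: lo_total.
Qed.

Definition reinsert := LOrder reinsert_irr reinsert_trans reinsert_total.

Lemma reinsert_other x y : x != s -> y != s -> lo_rel reinsert x y = lo_rel R x y.
Proof. by rewrite /= /reinsert_rel => /negbTE-> /negbTE->. Qed.

Lemma reinsert_below x : x != s -> lo_rel reinsert s x = D x.
Proof. by rewrite /= /reinsert_rel eqxx => ->. Qed.

Lemma reinsert_above x : x != s -> lo_rel reinsert x s = ~~ D x.
Proof. by rewrite /= /reinsert_rel eqxx => /negbTE->. Qed.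

End Reinsert.

Definition overtakes (A : finType) (R R' : lorder A) (s x : A) :=
  lo_rel R x s && lo_rel R' s x.

Definition swaps_in (A : finType) (R R' : lorder A) (s : A) (T W : {set A}) :=
  exists x, [/\ x \in T, W = T :\ x :|: [set s], lo_rel R x s & lo_rel R' s x].

Lemma swaps_in_pair (A : finType) (R R' : lorder A) (s a b : A) :
  a != b -> overtakes R R' s a -> swaps_in R R' s [set a; b] [set b; s].
Proof.
move=> neq_ab /andP[a_s s_a]; exists a; split=> //; first by rewrite !inE eqxx.
by rewrite setU1K // inE.
Qed.

Section Raise.
Variables (A : finType) (R R' : lorder A) (s : A).
Hypothesis raise : moves_up R R' s.

Lemma raise_other x y : x != s -> y != s -> lo_rel R' x y = lo_rel R x y.
Proof. by case: raise => agree _; apply: agree. Qed.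

Lemma raise_below x : lo_rel R s x -> lo_rel R' s x.
Proof. by case: raise => _; apply. Qed.

Lemma raise_above x : lo_rel R' x s -> lo_rel R x s.
Proof.
move=> xs; have [exs|nxs] := eqVneq x s; first by rewrite exs lo_irr in xs.
by apply: contraTT xs => /(lo_relN nxs)/raise_below/lo_asym.
Qed.

Lemma raise_rank_other x y : rank R x != rank R s -> rank R y != rank R s ->
  (rank R' x < rank R' y) = (rank R x < rank R y).
Proof. by rewrite !rank_eq -!lo_rel_rank; apply: raise_other. Qed.

Lemma raise_rank_below x : rank R s < rank R x -> rank R' s < rank R' x.
Proof. by rewrite -!lo_rel_rank; apply: raise_below. Qed.

Lemma raise_rank_eq x y : (rank R' x == rank R' y) = (rank R x == rank R y).
Proof. by rewrite !rank_eq. Qed.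

Arguments raise_rank_other : clear implicits.
Arguments raise_rank_below : clear implicits.

Section Pairs.
Variables a b c d : A.
Hypotheses (ab : rank R a < rank R b) (cd : rank R c < rank R d).
Hypotheses (best_le : rank R a <= rank R c) (worst_le : rank R b <= rank R d).
Hypothesis best_le' : minn (rank R' c) (rank R' d) <= minn (rank R' a) (rank R' b).
Hypothesis worst_le' : maxn (rank R' c) (rank R' d) <= maxn (rank R' a) (rank R' b).

Lemma raise_winner : s \in [set a; b] -> c = a /\ d = b.
Proof.
rewrite !inE => /orP s_ab.
suff [/rank_inj-> /rank_inj->] : rank R c = rank R a /\ rank R d = rank R b by [].
case: s_ab => /eqP es; [subst a | subst b].
- have := raise_rank_below b; have := raise_rank_below c.
  have := raise_rank_below d; have := raise_rank_other b d.
  have := raise_rank_eq c s.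
  lia.
- have := raise_rank_below d; have := raise_rank_other a c.
  have := raise_rank_other a d; have := raise_rank_eq d s.
  lia.
Qed.

Lemma raise_bystander : s \notin [set a; b] -> s \notin [set c; d] -> c = a /\ d = b.
Proof.
rewrite !inE -!(rank_eq R) => s_ab s_cd.
suff [/rank_inj-> /rank_inj->] : rank R c = rank R a /\ rank R d = rank R b by [].
have := raise_rank_other a b; have := raise_rank_other c d.
have := raise_rank_other a c; have := raise_rank_other b d.
lia.
Qed.

Lemma raise_newcomer_top : s \notin [set a; b] -> c = s ->
  d = b /\ overtakes R R' s a.
Proof.
rewrite !inE negb_or -!(rank_eq R) => /andP[sa sb] cs; subst c.
have /rank_inj db : rank R d = rank R b.
  by have := raise_rank_other a b; have := raise_rank_other b d; lia.
subst d; rewrite /overtakes !lo_rel_rank.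
split=> //; have := raise_rank_other a b; have := raise_rank_eq a s; lia.
Qed.

Lemma raise_newcomer_bottom : s \notin [set a; b] -> d = s ->
  [\/ c = a /\ overtakes R R' s b, c = b /\ overtakes R R' s a
     | overtakes R R' s a && overtakes R R' s b].
Proof.
rewrite !inE negb_or -!(rank_eq R) => /andP[sa sb] ds; subst d.
rewrite /overtakes !lo_rel_rank.
have := raise_rank_other a b; have := raise_rank_eq a s; have := raise_rank_eq b s.
have [ca|ca] := eqVneq c a; first by subst c; constructor 1; split=> //; lia.
have [cb|cb] := eqVneq c b; first by subst c; constructor 2; split=> //; lia.
constructor 3; move: ca cb; rewrite -!(rank_eq R) => ca cb.
have := raise_rank_other a c; lia.
Qed.

Lemma raise_pair :
  (s \in [set a; b] -> [set c; d] = [set a; b]) /\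
  (s \notin [set a; b] ->
     [\/ [set c; d] = [set a; b], swaps_in R R' s [set a; b] [set c; d]
        | overtakes R R' s a && overtakes R R' s b]).
Proof.
split=> [/raise_winner[-> ->] // | s_ab].
have [s_cd|s_cd] := boolP (s \in [set c; d]); last first.
  by case: (raise_bystander s_ab s_cd) => -> ->; constructor 1.
have neq_ab : a != b by apply: contraTneq ab => ->; rewrite ltnn.
move: s_cd; rewrite !inE => /orP[]/eqP es.
- have [-> oa] := raise_newcomer_top s_ab (esym es).
  by constructor 2; rewrite -es [[set s; b]]setUC; apply: swaps_in_pair.
- case: (raise_newcomer_bottom s_ab (esym es)) => [[-> ob]|[-> oa]|both].
  + constructor 2; rewrite -es [[set a; b]]setUC.
    by apply: swaps_in_pair; rewrite // eq_sym.
  + by constructor 2; rewrite -es; apply: swaps_in_pair.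
  + by constructor 3.
Qed.

End Pairs.

Lemma raise_split a b : lo_rel R a s -> lo_rel R a b -> lo_rel R' s b ->
  exists M, [/\ moves_up R M s, moves_up M R' s, lo_rel M a s & lo_rel M s b].
Proof.
move=> a_s ab s_b; have as' := lo_rel_neq a_s.
have bs : b != s by rewrite eq_sym; apply: lo_rel_neq s_b.
pose D x := lo_rel R' s x && lo_rel R' a x.
have D_down x y : D x -> y != s -> lo_rel R' x y -> D y.
  by case/andP=> sx ax _ xy; rewrite /D (lo_rel_trans sx xy) (lo_rel_trans ax xy).
have agree_ab : lo_rel R' a b by rewrite raise_other.
exists (reinsert D_down); split.
- split=> [x y xs ys | x sx]; first by rewrite reinsert_other // raise_other.
  have xs : x != s by rewrite eq_sym; apply: lo_rel_neq sx.
  rewrite reinsert_below // /D raise_below //= raise_other //.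
  exact: lo_rel_trans a_s sx.
- split=> [x y xs ys | x]; first by rewrite reinsert_other.
  have [-> | xs] := eqVneq x s; first by rewrite lo_irr.
  by rewrite reinsert_below // => /andP[].
- by rewrite reinsert_above // /D lo_irr andbF.
- by rewrite reinsert_below // /D s_b.
Qed.

End Raise.

Section Update.
Variables (V A : finType) (P : profile V A) (i : V).

Lemma upd_same R : upd P i R i = R.
Proof. by rewrite /upd eqxx. Qed.

Lemma upd_upd R R' : upd (upd P i R) i R' = upd P i R'.
Proof. by apply: functional_extensionality => j; rewrite /upd; case: eqP. Qed.

Lemma upd_id : upd P i (P i) = P.
Proof. by apply: functional_extensionality => j; rewrite /upd; case: eqP => [->|]. Qed.

End Update.

Section Rule.
Variables (V A : finType) (F : profile V A -> {set A}).
Hypotheses (F_pair : consular F) (F_spp : SPP F) (F_spo : SPO F).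

Lemma rank_bounds (P : profile V A) i R' a b c d :
  a != b -> c != d -> F P = [set a; b] -> F (upd P i R') = [set c; d] ->
  minn (rank (P i) a) (rank (P i) b) <= minn (rank (P i) c) (rank (P i) d) /\
  maxn (rank (P i) a) (rank (P i) b) <= maxn (rank (P i) c) (rank (P i) d).
Proof.
move=> neq_ab neq_cd FP FP'.
have [x best_x <-] := best_pair (P i) neq_ab.
have [y best_y <-] := best_pair (P i) neq_cd.
have [x' worst_x <-] := worst_pair (P i) neq_ab.
have [y' worst_y <-] := worst_pair (P i) neq_cd.
rewrite -FP in best_x worst_x; rewrite -FP' in best_y worst_y.
by split; apply: weakpref_rank; [exact: F_spo best_x best_y | exact: F_spp worst_x worst_y].
Qed.

Lemma raise_outcome (P : profile V A) i R' s a b :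
  moves_up (P i) R' s -> F P = [set a; b] -> lo_rel (P i) a b ->
  (s \in [set a; b] -> F (upd P i R') = [set a; b]) /\
  (s \notin [set a; b] ->
     [\/ F (upd P i R') = [set a; b], swaps_in (P i) R' s [set a; b] (F (upd P i R'))
       | overtakes (P i) R' s a && overtakes (P i) R' s b]).
Proof.
move=> raise FP ab; have [c [d [FP' cd]]] := pair_sorted (P i) (F_pair (upd P i R')).
have ab' := rank_lt ab; have cd' := rank_lt cd.
have [best_le worst_le] := rank_bounds (lo_rel_neq ab) (lo_rel_neq cd) FP FP'.
have := @rank_bounds (upd P i R') i (P i) c d a b (lo_rel_neq cd) (lo_rel_neq ab) FP'.
rewrite upd_upd upd_id upd_same => /(_ FP) [best_le' worst_le'].
rewrite (minn_idPl (ltnW ab')) (minn_idPl (ltnW cd')) in best_le.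
rewrite (maxn_idPr (ltnW ab')) (maxn_idPr (ltnW cd')) in worst_le.
rewrite FP'; exact: (raise_pair raise ab' cd' best_le worst_le best_le' worst_le').
Qed.

Lemma raise_swaps_or_stays (P : profile V A) i R' s a b :
  moves_up (P i) R' s -> F P = [set a; b] -> lo_rel (P i) a b -> s \notin [set a; b] ->
  F (upd P i R') = [set a; b] \/ swaps_in (P i) R' s [set a; b] (F (upd P i R')).
Proof.
move=> raise FP ab s_ab.
case: (raise_outcome raise FP ab).2 => // [->|sw|]; [by left | by right |].
case/andP=> /andP[a_s _] /andP[b_s s_b].
have [M [raise1 raise2 Ma_s Ms_b]] := raise_split raise a_s ab s_b.
pose PM := upd P i M.
have PM_i : PM i = M by rewrite /PM upd_same.
have PM_R' : upd PM i R' = upd P i R' by rewrite /PM upd_upd.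
have raisePM : moves_up (PM i) R' s by rewrite PM_i.
have [as' bs] := (lo_rel_neq a_s, lo_rel_neq b_s).
case: (raise_outcome raise1 FP ab).2 => // [FPM | [x [x_ab FPM x_s s_x]] | ].
- have MPM : lo_rel (PM i) a b by rewrite PM_i (raise_other raise1).
  rewrite -PM_R'; case: (raise_outcome raisePM FPM MPM).2 => //.
  + by left.
  + case=> x [x_ab FP' x_s s_x]; right; exists x; split=> //.
    rewrite PM_i in x_s; exact: (raise_above raise1 x_s).
  + by case/andP=> _ /andP[]; rewrite PM_i (negbTE (lo_asym Ms_b)).
- move: x_ab; rewrite !inE => /orP[]/eqP xe; subst x.
    by rewrite (negbTE (lo_asym Ma_s)) in s_x.
  have FPM' : F PM = [set a; s].
    by rewrite FPM [[set a; b]]setUC setU1K // inE eq_sym (lo_rel_neq ab).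
  have MPM : lo_rel (PM i) a s by rewrite PM_i.
  have [stay _] := raise_outcome raisePM FPM' MPM.
  rewrite -PM_R' stay; last by rewrite !inE eqxx orbT.
  by right; exists b; rewrite -FPM' FPM !inE eqxx orbT.
- by case/andP=> /andP[_ Ms_a]; rewrite (negbTE (lo_asym Ma_s)) in Ms_a.
Qed.

End Rule.

Theorem lemma10 (V A : finType) (F : profile V A -> {set A})
  (HF : consular F) (Hspp : SPP F) (Hspo : SPO F)
  (P : profile V A) (a b : A) (Hab : F P = [set a; b])
  (i : V) (s : A) (Ri' : lorder A) (Hmove : moves_up (P i) Ri' s) :
  (s \in [set a; b] -> F (upd P i Ri') = F P) /\
  (s \notin [set a; b] ->
     F (upd P i Ri') = F P \/
     exists x, [/\ x \in [set a; b],
                   F (upd P i Ri') = ([set a; b] :\ x) :|: [set s],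
                   lo_rel (P i) x s & lo_rel Ri' s x]).
Proof.
have [a' [b' [FP ab]]] := pair_sorted (P i) (HF P).
rewrite -Hab FP.
have [stay _] := raise_outcome HF Hspp Hspo Hmove FP ab.
split=> [/stay -> // | s_ab].
by case: (raise_swaps_or_stays HF Hspp Hspo Hmove FP ab s_ab); [left | right].
Qed.
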